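(* Assume (RHS.1), (RHS.2), (BC.1), (BC.2), and, if (RHS.2b) holds, that condition (M.1) holds for all meshes. Then for any choice of parameters $\mathfrak h=(h,\varepsilon,\theta)$ there exists a unique $u_{\mathfrak h}\in\mathbb V_h$ solving the discrete problem.
   Context: Setting: $\Omega\subset\mathbb R^d$ ($d\ge1$) is a bounded domain with continuous boundary. For $r>0$, $\Omega^{(r)}=\{x\in\Omega:\operatorname{dist}(x,\partial\Omega)>r\}$. $\{\mathcal T_h\}_{h>0}$ is a family of meshes of closed simplices, $h=\max_T\operatorname{diam}T$, $\Omega_h$ the interior of the union of the simplices, with $\Omega^{(h)}\subset\Omega_h\subset\Omega$; $\mathcal N_h$ the set of vertices. $\mathbb V_h$: continuous piecewise linear functions on $\mathcal T_h$, hat basis $\{\hat\varphi_z\}$, Lagrange interpolant $\mathcal I_h$. Parameters $\mathfrak h=(h,\varepsilon,\theta)$, $\varepsilon\in[h,\operatorname{diam}\Omega]$, $0<\theta\le1$. $\mathcal N_h^I=\mathcal N_h\cap\Omega^{(2\varepsilon)}$, $\mathcal N_h^b=\mathcal N_h\setminus\mathcal N_h^I$. $\mathbb S_\theta$: finite symmetric subset of the unit sphere $\mathbb S$ such that each $v\in\mathbb S$ has $v_\theta\in\mathbb S_\theta$ with $|v-v_\theta|\le\theta$. For $z\in\mathcal N_h^I$: $\mathcal N_{\mathfrak h}(z)=\{z\}\cup\{z+\varepsilon v_\theta:v_\theta\in\mathbb S_\theta\}$, $-\Delta^\diamond_{\infty,\mathfrak h}w(z)=\varepsilon^{-2}\big(2w(z)-\max_{x\in\mathcal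 N_{\mathfrak h}(z)}\mathcal I_hw(x)-\min_{x\in\mathcal N_{\mathfrak h}(z)}\mathcal I_hw(x)\big)$, $\widetilde{\mathcal N}_{\mathfrak h}(z)=\{z\}\cup\{z'\in\mathcal N_h:\exists v_\theta\in\mathbb S_\theta,\ \hat\varphi_{z'}(z+\varepsilon v_\theta)>0\}$. Assumptions: (RHS.1) $f\in C(\Omega)\cap L^\infty(\Omega)$. (RHS.2) either (RHS.2a) $\sup_\Omega f<0$ or $\inf_\Omega f>0$, or (RHS.2b) $f\equiv0$. (BC.1) $g\in C(\partial\Omega)$. (BC.2) for every $\varepsilon>0$ a function $\tilde g_\varepsilon\in C(\overline\Omega)$ is given such that, if $g\in C^{0,\alpha}(\partial\Omega)$ for some $\alpha\in[0,1]$, then $\tilde g_\varepsilon\in C^{0,\alpha}(\overline\Omega)$ and $\|g-\tilde g_\varepsilon\|_{L^\infty(\partial\Omega)}\le C\varepsilon^\alpha$. (M.1) for every nonempty $S\subset\mathcal N_h^I$ there are $z\in S$, $z'\in\mathcal N_h\setminus S$ with $z'\in\widetilde{\mathcal N}_{\mathfrak h}(z)$. Discrete problem: find $u_{\mathfrak h}\in\mathbb V_h$ with $-\Delta^\diamond_{\infty,\mathfrak h}u_{\mathfrak h}(z)=f(z)$ for $z\in\mathcal N_h^I$ and $u_{\mathfrak h}(z)=\tilde g_\varepsilon(z)$ for $z\in\mathcal N_h^b$. *)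

From mathcomp Require Import all_boot all_order all_algebra.
From mathcomp Require Import reals exp.
Set Implicit Arguments. Unset Strict Implicit. Unset Printing Implicit Defensive.
Import Order.TTheory GRing.Theory Num.Theory.
Local Open Scope ring_scope.

Section Defs.
Variable R : realType.

Definition enorm (k : nat) (x : 'rV[R]_k) : R := Num.sqrt (\sum_i (x 0 i) ^+ 2).

Variable n : nat.
(* points of R^d with d = n.+1 >= 1 *)
Notation pt := 'rV[R]_n.+1.

Definition eopen (A : pt -> Prop) :=
  forall x, A x -> exists2 r, 0 < r & forall y, enorm (y - x) < r -> A y.
Definition einterior (A : pt -> Prop) (x : pt) :=
  exists2 r, 0 < r & forall y, enorm (y - x) < r -> A y.
Definition eclosure (A : pt -> Prop) (x : pt) :=
  forall r, 0 < r -> exists y, A y /\ enorm (y - x) < r.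
Definition boundary (A : pt -> Prop) (x : pt) := eclosure A x /\ ~ einterior A x.
Definition ebounded (A : pt -> Prop) := exists M : R, forall x, A x -> enorm x <= M.
Definition econnected (A : pt -> Prop) :=
  forall U V : pt -> Prop, eopen U -> eopen V -> (forall x, A x -> U x \/ V x) ->
  (exists x, A x /\ U x) -> (exists x, A x /\ V x) -> exists x, A x /\ U x /\ V x.
Definition econt_on (S : pt -> Prop) (f : pt -> R) :=
  forall x, S x -> forall e, 0 < e -> exists2 d, 0 < d &
    forall y, S y -> enorm (y - x) < d -> `|f y - f x| < e.

Definition front (y : pt) : 'rV[R]_n := \row_(i < n) y 0 (widen_ord (leqnSn n) i).
Definition lastc (y : pt) : R := y 0 ord_max.

(* Omega has a continuous boundary: locally, after a rigid change of
   coordinates, Omega is the strict epigraph of a continuous function *)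
Definition continuous_boundary (Om : pt -> Prop) :=
  forall x0, boundary Om x0 ->
  exists2 r, 0 < r & exists Q : 'M[R]_n.+1, Q *m Q^T = 1%:M /\
    exists phi : 'rV[R]_n -> R,
      (forall y0 e, 0 < e -> exists2 d, 0 < d &
          forall y, enorm (y - y0) < d -> `|phi y - phi y0| < e) /\
      forall x, enorm (x - x0) < r ->
        (Om x <-> phi (front ((x - x0) *m Q)) < lastc ((x - x0) *m Q)).

Definition bounded_domain_cb (Om : pt -> Prop) :=
  (exists x, Om x) /\ eopen Om /\ econnected Om /\ ebounded Om /\ continuous_boundary Om.

(* Omega^(r) = { x in Omega : dist(x, boundary Omega) > r } *)
Definition inner (Om : pt -> Prop) (r : R) (x : pt) :=
  Om x /\ exists2 s, r < s & forall y, boundary Om y -> s <= enorm (x - y).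

(* eps <= diam Omega *)
Definition le_diam (Om : pt -> Prop) (e : R) :=
  forall d, 0 < d -> exists x y, Om x /\ Om y /\ e - d < enorm (x - y).

Definition holder (alpha : R) (S : pt -> Prop) (f : pt -> R) :=
  econt_on S f /\ (exists M, forall x, S x -> `|f x| <= M) /\
  exists L, forall x y, S x -> S y -> x <> y ->
    `|f x - f y| <= L * powR (enorm (x - y)) alpha.

(* --- meshes: m closed simplices T k, each given by its n.+2 = d+1 vertices --- *)
Definition simplex := 'I_n.+2 -> pt.

Definition bary (T : simplex) (lam : 'I_n.+2 -> R) (x : pt) :=
  (forall i, 0 <= lam i) /\ \sum_i lam i = 1 /\ x = \sum_i lam i *: T i.

Definition nondeg_simplex (T : simplex) :=
  forall mu : 'I_n.+2 -> R, \sum_i mu i = 0 -> \sum_i mu i *: T i = 0 ->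
    forall i, mu i = 0.

Definition in_mesh (m : nat) (Th : 'I_m -> simplex) (x : pt) :=
  exists k lam, bary (Th k) lam x.

(* conforming: the intersection of two simplices is the convex hull of
   their common vertices (a common face, possibly empty) *)
Definition conforming (m : nat) (Th : 'I_m -> simplex) :=
  forall k1 k2 lam x, bary (Th k1) lam x -> in_mesh (fun _ : 'I_1 => Th k2) x ->
    forall i, 0 < lam i -> exists j, Th k2 j = Th k1 i.

Definition is_node (m : nat) (Th : 'I_m -> simplex) (z : pt) :=
  exists k i, Th k i = z.

(* V_h : continuous piecewise linear functions (linear on every simplex) *)
Definition in_Vh (m : nat) (Th : 'I_m -> simplex) (u : pt -> R) :=
  forall k lam x, bary (Th k) lam x -> u x = \sum_i lam i * u (Th k i).

(* hat function of node z' is positive at x *)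
Definition hat_pos (m : nat) (Th : 'I_m -> simplex) (z' x : pt) :=
  exists k i lam, Th k i = z' /\ bary (Th k) lam x /\ 0 < lam i.

Definition sphere_net (theta : R) (S : seq pt) :=
  (forall v, v \in S -> enorm v = 1) /\ (forall v, v \in S -> - v \in S) /\
  forall v : pt, enorm v = 1 -> exists2 w, w \in S & enorm (v - w) <= theta.

(* discrete operator -Delta^diamond_{infty,h} w(z) (w in V_h, so I_h w = w) *)
Definition disc_inflap (eps : R) (S : seq pt) (w : pt -> R) (z : pt) : R :=
  eps ^-2 * (2 * w z - \big[Num.max/w z]_(v <- S) w (z + eps *: v)
                     - \big[Num.min/w z]_(v <- S) w (z + eps *: v)).

Definition cond_M1 (m : nat) (Th : 'I_m -> simplex) (Om : pt -> Prop)
    (eps : R) (S : seq pt) :=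
  forall P : pt -> Prop, (forall z, P z -> is_node Th z /\ inner Om (2 * eps) z) ->
    (exists z, P z) ->
    exists z z', P z /\ is_node Th z' /\ ~ P z' /\
      (z' = z \/ exists2 v, v \in S & hat_pos Th z' (z + eps *: v)).

Definition disc_solution (m : nat) (Th : 'I_m -> simplex) (Om : pt -> Prop)
    (eps : R) (S : seq pt) (f gt : pt -> R) (u : pt -> R) :=
  in_Vh Th u /\
  (forall z, is_node Th z -> inner Om (2 * eps) z -> disc_inflap eps S u z = f z) /\
  (forall z, is_node Th z -> ~ inner Om (2 * eps) z -> u z = gt z).

End Defs.

(* Existence is Perron's method on the finitely many nodal values.  The map
   sending nodal values [U] to [(max + min + eps^2 f) / 2] over the stencil of
   the interpolant of [U] (and to the boundary datum off the interior nodes)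
   is monotone, and its fixed points are exactly the discrete solutions.  The
   paraboloids [-B + a |x|^2] and [B - a |x|^2], with [a >= sup |f|] and [B]
   large, are a sub- and a supersolution: the interpolant of a convex function
   lies above it, and a symmetric stencil of unit vectors sees the curvature of
   [a |x|^2] in every direction.

   Uniqueness is a discrete comparison principle.  At nodes where [u1 - u2]
   attains a positive maximum [M] (necessarily interior ones), the extremal
   stencil values of [u1] and [u2] also differ by exactly [M].  Among these
   nodes take one maximizing [u1]; there the stencil maximum of [u1] equals
   [u1] itself, which is impossible when [f < 0].  The case [f > 0] follows
   by the symmetry [u -> -u], and when [f = 0] condition (M.1) propagates the
   maximality to a node outside the chosen set. *)

From mathcomp Require Import all_boot all_order all_algebra.
From mathcomp Require Import reals exp.
From mathcomp Require Import boolp classical_sets.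
From mathcomp Require Import ring lra.
Set Implicit Arguments. Unset Strict Implicit. Unset Printing Implicit Defensive.
Import Order.TTheory GRing.Theory Num.Theory.
Local Open Scope ring_scope.

Section EuclideanNorm.
Variables (R : realType) (n : nat).
Notation pt := 'rV[R]_n.+1.
Implicit Types (x y : pt) (a b c : R).

Definition sq x : R := \sum_i x 0 i ^+ 2.
Definition dot x y : R := \sum_i x 0 i * y 0 i.

Lemma sq_ge0 x : 0 <= sq x.
Proof. by apply: sumr_ge0 => i _; rewrite sqr_ge0. Qed.

Lemma sqr_enorm x : enorm x ^+ 2 = sq x.
Proof. exact/sqr_sqrtr/sq_ge0. Qed.

Lemma enorm_ge0 x : 0 <= enorm x.
Proof. exact: sqrtr_ge0. Qed.

Lemma sq_lincomb a b x y :
  sq (a *: x + b *: y) = a ^+ 2 * sq x + 2 * a * b * dot x y + b ^+ 2 * sq y.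
Proof.
rewrite /sq /dot !mulr_sumr -!big_split /=.
by apply: eq_bigr => i _; rewrite !mxE; ring.
Qed.

Lemma sq_stencil_pair z v c :
  sq (z + c *: v) + sq (z + c *: - v) = 2 * sq z + 2 * c ^+ 2 * sq v.
Proof.
have := sq_lincomb 1 c z v; have := sq_lincomb 1 (- c) z v.
by rewrite !scale1r scaleNr -scalerN => -> ->; ring.
Qed.

Lemma sqZ c x : sq (c *: x) = c ^+ 2 * sq x.
Proof. by rewrite /sq mulr_sumr; apply: eq_bigr => i _; rewrite mxE exprMn. Qed.

Lemma enormZ c x : enorm (c *: x) = `|c| * enorm x.
Proof. by rewrite /enorm -/(sq _) sqZ sqrtrM ?sqr_ge0 // sqrtr_sqr. Qed.

Lemma enorm0 : enorm (0 : pt) = 0.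
Proof. by rewrite -(scale0r (0 : pt)) enormZ normr0 mul0r. Qed.

Lemma enormN x : enorm (- x) = enorm x.
Proof. by rewrite -scaleN1r enormZ normrN normr1 mul1r. Qed.

Lemma sq_eq0 x : sq x = 0 -> x = 0.
Proof.
move=> x0; apply/rowP => i; rewrite mxE; apply/eqP; rewrite -sqrf_eq0.
by apply/eqP/(psumr_eq0P (fun i _ => sqr_ge0 (x 0 i)) x0).
Qed.

Lemma dot0l y : dot 0 y = 0.
Proof. by rewrite /dot big1 // => i _; rewrite mxE mul0r. Qed.

Lemma dotC x y : dot x y = dot y x.
Proof. by apply: eq_bigr => i _; rewrite mulrC. Qed.

Lemma dot_le_enorm x y : dot x y <= enorm x * enorm y.
Proof.
set a := enorm x; set b := enorm y.
have [a0|a_neq0] := eqVneq a 0.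
  have -> : x = 0 by apply: sq_eq0; rewrite -sqr_enorm -/a a0 expr0n.
  by rewrite dot0l mulr_ge0 ?enorm_ge0.
have [b0|b_neq0] := eqVneq b 0.
  have -> : y = 0 by apply: sq_eq0; rewrite -sqr_enorm -/b b0 expr0n.
  by rewrite dotC dot0l mulr_ge0 ?enorm_ge0.
have ab_gt0 : 0 < a * b by rewrite mulr_gt0 // lt0r ?a_neq0 ?b_neq0 ?enorm_ge0.
(* expanding [0 <= |b x - a y|^2] gives [a b (a b - dot x y) >= 0] *)
have := sq_ge0 (b *: x + (- a) *: y).
rewrite sq_lincomb -!sqr_enorm -/a -/b => expansion_ge0.
have : 0 <= (a * b) * (a * b - dot x y) by nra.
by rewrite pmulr_rge0 // subr_ge0.
Qed.

Lemma enormD x y : enorm (x + y) <= enorm x + enorm y.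
Proof.
rewrite -(ler_pXn2r (n := 2)) ?nnegrE ?addr_ge0 ?enorm_ge0 //.
rewrite sqr_enorm; have := sq_lincomb 1 1 x y; rewrite !scale1r => ->.
rewrite -!sqr_enorm; have := dot_le_enorm x y; nra.
Qed.

Lemma enorm_delta : enorm (delta_mx 0 0 : pt) = 1.
Proof.
rewrite /enorm (bigD1 0) //= big1 => [|i i_neq0]; first by rewrite mxE !eqxx expr1n addr0 sqrtr1.
by rewrite mxE (negbTE i_neq0) andbF expr0n.
Qed.

End EuclideanNorm.

Lemma real_induction (R : realType) (P : R -> Prop) :
  (forall t, 0 <= t <= 1 -> (forall s, 0 <= s < t -> P s) ->
     P t /\ exists2 d, 0 < d & forall s, t <= s < t + d -> P s) ->
  P 1.
Proof.
move=> step.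
pose A : set R := fun t => 0 <= t <= 1 /\ forall s, 0 <= s < t -> P s.
have A0 : A 0 by split=> [|s /andP[]]; [rewrite lexx ler01 | lra].
have supA : has_sup A by split; [exists 0 | exists 1 => t [/andP[]]].
set t0 := sup A.
have t0_ge0 : 0 <= t0 by exact: sup_upper_bound.
have t0_le1 : t0 <= 1 by apply: ge_sup => [|t [/andP[]]]; first by exists 0.
have below : forall s, 0 <= s < t0 -> P s.
  move=> s /andP[s0 st0].
  have [a [_ Pa] t0a] : exists2 a, A a & t0 - (t0 - s) < a.
    by apply: sup_adherent supA; rewrite subr_gt0.
  by apply: Pa; rewrite s0; move: t0a; rewrite /t0; lra.
have [|Pt0 [d d0 Pd]] := step t0 _ below; first by rewrite t0_ge0 t0_le1.
set t1 := Num.min 1 (t0 + d).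
have At1 : A t1.
  split=> [|s /andP[s0 st1]]; first by rewrite /t1 le_min ge_min lexx ler01; lra.
  have [st0|t0s] := ltP s t0; first by apply: below; rewrite s0.
  by apply: Pd; rewrite t0s; move: st1; rewrite /t1 lt_min => /andP[].
have : t1 <= t0 by exact: sup_upper_bound.
rewrite /t1 ge_min => /orP[le1t0|]; last by lra.
by have -> : (1 : R) = t0 by apply/eqP; rewrite eq_le le1t0 t0_le1.
Qed.

Section DistanceToBoundary.
Variables (R : realType) (n : nat).
Notation pt := 'rV[R]_n.+1.
Implicit Types (Om : pt -> Prop) (z d : pt).

Lemma segment_diff z d a b : (z + a *: d) - (z + b *: d) = (a - b) *: d.
Proof. by rewrite scalerBl opprD addrACA subrr add0r. Qed.

Lemma eclosure_segment Om z d t : 0 < t ->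
  (forall s, 0 <= s < t -> Om (z + s *: d)) -> eclosure Om (z + t *: d).
Proof.
move=> t_gt0 seg r r_gt0.
have dr_gt0 : 0 < enorm d + 1 by have := enorm_ge0 d; lra.
set mu := Num.min t (r / (enorm d + 1)).
have mu_gt0 : 0 < mu by rewrite lt_min t_gt0 divr_gt0.
have mu_le_t : mu <= t by rewrite ge_min lexx.
have mu_le_r : mu * (enorm d + 1) <= r by rewrite -ler_pdivlMr // ge_min lexx orbT.
exists (z + (t - mu / 2) *: d); split; first by apply: seg; apply/andP; split; lra.
rewrite segment_diff enormZ ler0_norm; last by lra.
have := enorm_ge0 d; nra.
Qed.

(* Real induction along the segment [z, z + d]: it cannot leave [Om] without
   meeting the boundary, which is too far away. *)
Lemma ball_sub_of_boundary_dist Om z d s : eopen Om -> Om z ->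
  (forall y, boundary Om y -> s <= enorm (z - y)) -> enorm d < s -> Om (z + d).
Proof.
move=> Om_open Omz far d_lt_s.
have dr_gt0 : 0 < enorm d + 1 by have := enorm_ge0 d; lra.
rewrite -[d]scale1r; apply: (@real_induction _ (fun t => Om (z + t *: d))).
move=> t /andP[t0 t_le1] seg.
have [[r r_gt0 ball_r]|not_int] := pselect (einterior Om (z + t *: d)).
  split; first by apply: ball_r; rewrite subrr enorm0.
  exists (r / (enorm d + 1)) => [|s' /andP[ts' s'td]]; first by rewrite divr_gt0.
  apply: ball_r; rewrite segment_diff enormZ ger0_norm ?subr_ge0 //.
  have : (s' - t) * (enorm d + 1) < r by rewrite -ltr_pdivlMr //; lra.
  have := enorm_ge0 d; nra.
exfalso.
have t_gt0 : 0 < t.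
  rewrite lt_def t0 andbT; apply/eqP => t_eq0; apply: not_int.
  by rewrite t_eq0 scale0r addr0; exact: Om_open.
have := far _ (conj (eclosure_segment t_gt0 seg) not_int).
rewrite opprD addrA subrr add0r enormN enormZ ger0_norm //.
have := enorm_ge0 d; nra.
Qed.

Lemma inner_translate Om r r' z d : eopen Om -> 0 <= r ->
  r + enorm d <= r' -> inner Om r' z -> inner Om r (z + d).
Proof.
move=> Om_open r_ge0 rd [Omz [s r's far]].
split; first by apply: (ball_sub_of_boundary_dist Om_open Omz far); lra.
exists (s - enorm d) => [|y /far]; first by lra.
have := enormD (z + d - y) (- d).
by rewrite enormN addrAC addrK; lra.
Qed.

End DistanceToBoundary.

Lemma convex_comb_gap (R : realType) (I : finType) (lam x : I -> R) a :
  \sum_i lam i = 1 -> a - \sum_i lam i * x i = \sum_i lam i * (a - x i).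
Proof.
move=> lam1; under [RHS]eq_bigr do rewrite mulrBr.
by rewrite sumrB -mulr_suml lam1 mul1r.
Qed.

Lemma convex_comb_le (R : realType) (I : finType) (lam x : I -> R) a :
  (forall i, 0 <= lam i) -> \sum_i lam i = 1 ->
  (forall i, 0 < lam i -> x i <= a) -> \sum_i lam i * x i <= a.
Proof.
move=> lam_ge0 lam1 xa; rewrite -subr_ge0 convex_comb_gap //.
apply: sumr_ge0 => i _; have [->|lam_neq0] := eqVneq (lam i) 0; first by rewrite mul0r.
by rewrite mulr_ge0 // subr_ge0 xa // lt_def lam_neq0 lam_ge0.
Qed.

Lemma convex_comb_eq (R : realType) (I : finType) (lam x : I -> R) a :
  (forall i, 0 <= lam i) -> \sum_i lam i = 1 ->
  (forall i, 0 < lam i -> x i <= a) -> \sum_i lam i * x i = a ->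
  forall i, 0 < lam i -> x i = a.
Proof.
move=> lam_ge0 lam1 xa comb_a i lam_gt0.
have terms_ge0 j : 0 <= lam j * (a - x j).
  have [->|lam_neq0] := eqVneq (lam j) 0; first by rewrite mul0r.
  by rewrite mulr_ge0 // subr_ge0 xa // lt_def lam_neq0 lam_ge0.
have := @psumr_eq0P _ _ predT _ (fun j _ => terms_ge0 j).
rewrite -convex_comb_gap // comb_a subrr => /(_ erefl i isT) /eqP.
by rewrite mulf_eq0 gt_eqF //= subr_eq0 => /eqP.
Qed.

Section Mesh.
Variables (R : realType) (n m : nat) (Th : 'I_m -> simplex R n).
Notation pt := 'rV[R]_n.+1.
Implicit Types (u : pt -> R) (x z : pt).

Lemma stencil_in_mesh Om (h eps : R) z v : eopen Om -> 0 < h -> h <= eps ->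
  (forall x, inner Om h x -> einterior (in_mesh Th) x) -> enorm v = 1 ->
  inner Om (2 * eps) z -> in_mesh Th (z + eps *: v).
Proof.
move=> Om_open h_gt0 h_le mesh_h v1 z_in.
have: inner Om h (z + eps *: v).
  apply: (inner_translate Om_open (ltW h_gt0) _ z_in).
  by rewrite enormZ v1 mulr1 ger0_norm; lra.
by move=> /mesh_h [r r_gt0]; apply; rewrite subrr enorm0.
Qed.

Lemma in_VhB u1 u2 : in_Vh Th u1 -> in_Vh Th u2 -> in_Vh Th (fun x => u1 x - u2 x).
Proof.
move=> Vu1 Vu2 k lam x bx; rewrite (Vu1 _ _ _ bx) (Vu2 _ _ _ bx) -sumrB.
by apply: eq_bigr => i _; rewrite mulrBr.
Qed.

Lemma in_VhN u : in_Vh Th u -> in_Vh Th (fun x => - u x).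
Proof.
move=> Vu k lam x bx; rewrite (Vu _ _ _ bx) -sumrN.
by apply: eq_bigr => i _; rewrite mulrN.
Qed.

Lemma in_Vh_le_vertices u k lam x a : in_Vh Th u -> bary (Th k) lam x ->
  (forall i, 0 < lam i -> u (Th k i) <= a) -> u x <= a.
Proof. by move=> Vu bx; rewrite (Vu _ _ _ bx); case: bx => [? [? _]]; exact: convex_comb_le. Qed.

Lemma in_Vh_eq_vertices u k lam x a : in_Vh Th u -> bary (Th k) lam x ->
  (forall i, 0 < lam i -> u (Th k i) <= a) -> u x = a ->
  forall i, 0 < lam i -> u (Th k i) = a.
Proof. by move=> Vu bx; rewrite (Vu _ _ _ bx); case: bx => [? [? _]]; exact: convex_comb_eq. Qed.

Lemma in_Vh_eq_on_mesh u1 u2 : in_Vh Th u1 -> in_Vh Th u2 ->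
  (forall k i, u1 (Th k i) = u2 (Th k i)) -> forall x, in_mesh Th x -> u1 x = u2 x.
Proof.
move=> Vu1 Vu2 nodes x [k [lam bx]]; rewrite (Vu1 _ _ _ bx) (Vu2 _ _ _ bx).
by apply: eq_bigr => i _; rewrite nodes.
Qed.

Lemma node_bounded (F : pt -> R) : exists B, forall z, is_node Th z -> F z <= B.
Proof.
exists (\big[Num.max/0]_(ki : 'I_m * 'I_n.+2) F (Th ki.1 ki.2)) => _ [k [i <-]].
exact: (le_bigmax _ _ (k, i)).
Qed.

Lemma node_argmax (P : pt -> Prop) (F : pt -> R) : (exists z, is_node Th z /\ P z) ->
  exists z, (is_node Th z /\ P z) /\ forall y, is_node Th y -> P y -> F y <= F z.
Proof.
move=> [_ [[k [i <-]] Pz]].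
pose Q (ki : 'I_m * 'I_n.+2) := `[< P (Th ki.1 ki.2) >].
have [|[k' i'] /asboolP Pz' z'_max] := @arg_maxP _ _ _ (k, i) Q (fun ki => F (Th ki.1 ki.2)).
  exact/asboolP.
exists (Th k' i'); split=> [|_ [k'' [i'' <-]] Py]; first by split=> //; exists k', i'.
by apply: (z'_max (k'', i'')); exact/asboolP.
Qed.

Lemma sq_bary_le k lam x : bary (Th k) lam x -> sq x <= \sum_i lam i * sq (Th k i).
Proof.
move=> [lam_ge0 [lam1 ->]]; rewrite /sq.
under [X in _ <= X]eq_bigr do rewrite mulr_sumr.
rewrite exchange_big /=; apply: ler_sum => j _; rewrite summxE.
rewrite (eq_bigr (fun i => lam i * Th k i 0 j)) => [|i _]; last by rewrite !mxE.
set c := \sum_i lam i * Th k i 0 j.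
(* the variance [sum_i lam_i (x_i - c)^2] is nonnegative *)
have : 0 <= \sum_i lam i * (Th k i 0 j - c) ^+ 2.
  by apply: sumr_ge0 => i _; rewrite mulr_ge0 ?sqr_ge0.
rewrite (eq_bigr (fun i =>
  lam i * Th k i 0 j ^+ 2 - 2 * c * (lam i * Th k i 0 j) + c ^+ 2 * lam i)) => [|i _]; last by ring.
by rewrite big_split sumrB /= -!mulr_sumr -/c lam1; lra.
Qed.

End Mesh.

Lemma sum_fibers (I J : finType) (V : nmodType) (s : I -> J) (F : I -> V) :
  \sum_j \sum_(i | s i == j) F i = \sum_i F i.
Proof. by rewrite [RHS](partition_big s predT). Qed.

Section NodalInterpolation.
Variables (R : realType) (n m : nat) (Th : 'I_m -> simplex R n).
Notation pt := 'rV[R]_n.+1.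
Implicit Types (U V : pt -> R) (x : pt).
Hypothesis Th_nondeg : forall k, nondeg_simplex (Th k).
Hypothesis Th_conf : conforming Th.

(* Conformity sends every vertex of [Th k1] carrying weight to a vertex [s i]
   of [Th k2]; nondegeneracy of [Th k2] then identifies the pushed-forward
   weights with [l2]. *)
Lemma bary_comb_eq k1 l1 k2 l2 x U :
  bary (Th k1) l1 x -> bary (Th k2) l2 x ->
  \sum_i l1 i * U (Th k1 i) = \sum_j l2 j * U (Th k2 j).
Proof.
move=> b1 b2; have conf := Th_conf b1 (ex_intro _ ord0 (ex_intro _ l2 b2)).
case: b1 => [l1_ge0 [l1_1 x1]]; case: b2 => [_ [l2_1 x2]].
pose s i := odflt ord0 [pick j | Th k2 j == Th k1 i].
have s_vertex i : l1 i != 0 -> Th k2 (s i) = Th k1 i.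
  move=> l1_neq0; have [|j ji] := conf i; first by rewrite lt_def l1_neq0 l1_ge0.
  by rewrite /s; case: pickP => [j' /eqP -> //|/(_ j)]; rewrite ji eqxx.
have s_scale i : l1 i *: Th k2 (s i) = l1 i *: Th k1 i.
  by have [->|/s_vertex ->] := eqVneq (l1 i) 0; rewrite ?scale0r.
have s_mul i : l1 i * U (Th k2 (s i)) = l1 i * U (Th k1 i).
  by have [->|/s_vertex ->] := eqVneq (l1 i) 0; rewrite ?mul0r.
pose mu j := \sum_(i | s i == j) l1 i.
have mu_l2 j : mu j = l2 j.
  apply/eqP; rewrite -subr_eq0; apply/eqP.
  apply: (Th_nondeg (k := k2) (mu := fun j => mu j - l2 j)).
    by rewrite sumrB /mu sum_fibers l1_1 l2_1 subrr.
  under eq_bigr do rewrite scalerBl scaler_suml.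
  apply/eqP; rewrite sumrB -x2 x1 subr_eq0; apply/eqP.
  rewrite (eq_bigr (fun j => \sum_(i | s i == j) l1 i *: Th k2 (s i))) => [|j' _].
    by rewrite sum_fibers; apply: eq_bigr => i _.
  by apply: eq_bigr => i /eqP ->.
under [RHS]eq_bigr do rewrite -mu_l2 /mu mulr_suml.
rewrite [RHS](eq_bigr (fun j => \sum_(i | s i == j) l1 i * U (Th k2 (s i)))) => [|j _].
  by rewrite sum_fibers; apply: eq_bigr => i _; rewrite s_mul.
by apply: eq_bigr => i /eqP ->.
Qed.

(* [0] off the mesh; the choice of simplex is irrelevant by [bary_comb_eq]. *)
Definition interp U x : R :=
  match pselect (exists kl : 'I_m * ('I_n.+2 -> R), bary (Th kl.1) kl.2 x) with
  | left H => let kl := proj1_sig (cid H) in \sum_i kl.2 i * U (Th kl.1 i)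
  | right _ => 0
  end.

Lemma interpE U k lam x : bary (Th k) lam x -> interp U x = \sum_i lam i * U (Th k i).
Proof.
move=> bx; rewrite /interp; case: pselect => [H|no_bary]; last first.
  by exfalso; apply: no_bary; exists (k, lam).
by case: cid => [[k' lam'] /= bx']; exact: (bary_comb_eq U bx' bx).
Qed.

Lemma bary_vertex k i : bary (Th k) (fun j => (j == i)%:R) (Th k i).
Proof.
split=> [j|]; first by rewrite ler0n.
split; first by rewrite (bigD1 i) //= big1 ?eqxx ?addr0 // => j /negbTE ->.
by rewrite (bigD1 i) //= big1 ?eqxx ?scale1r ?addr0 // => j /negbTE ->; rewrite scale0r.
Qed.

Lemma interp_node U z : is_node Th z -> interp U z = U z.
Proof.
move=> [k [i <-]]; rewrite (interpE U (bary_vertex k i)) (bigD1 i) //= big1 ?eqxx ?mul1r ?addr0 //.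
by move=> j /negbTE ->; rewrite mul0r.
Qed.

Lemma in_Vh_interp U : in_Vh Th (interp U).
Proof.
by move=> k lam x bx; rewrite (interpE U bx); apply: eq_bigr => i _; rewrite interp_node //; exists k, i.
Qed.

Lemma interp_le U V x : (forall k i, U (Th k i) <= V (Th k i)) -> interp U x <= interp V x.
Proof.
move=> UV; rewrite /interp; case: pselect => // H; case: cid => [[k lam] /= [lam_ge0 _]].
by apply: ler_sum => i _; exact: ler_wpM2l.
Qed.

Lemma interpN U x : interp (fun y => - U y) x = - interp U x.
Proof.
rewrite /interp; case: pselect => [H|_]; last by rewrite oppr0.
by rewrite -sumrN; apply: eq_bigr => i _; rewrite mulrN.
Qed.

Lemma interp_paraboloid_ge c a x : 0 <= a -> in_mesh Th x ->
  c + a * sq x <= interp (fun y => c + a * sq y) x.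
Proof.
move=> a_ge0 [k [lam bx]]; rewrite (interpE _ bx).
have := sq_bary_le bx; case: bx => [_ [lam1 _]] jensen.
rewrite (eq_bigr (fun i => c * lam i + a * (lam i * sq (Th k i)))) => [|i _]; last by ring.
by rewrite big_split /= -!mulr_sumr lam1 mulr1 lerD2l ler_wpM2l.
Qed.

End NodalInterpolation.

Lemma big_selective (T : Type) (I : eqType) (op : T -> T -> T) x0 (s : seq I) (F : I -> T) :
  (forall a b, op a b = a \/ op a b = b) ->
  \big[op/x0]_(i <- s) F i = x0 \/ exists2 i, i \in s & \big[op/x0]_(i <- s) F i = F i.
Proof.
move=> op_sel; rewrite big_seq; elim/big_ind: _ => [|a b a_sel b_sel|i si]; [by left| |by right; exists i].
by have [->|->] := op_sel a b.
Qed.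

Section StencilOperator.
Variables (R : realType) (n : nat) (eps : R) (S : seq 'rV[R]_n.+1).
Notation pt := 'rV[R]_n.+1.
Implicit Types (V W : pt -> R) (z : pt).

Definition stencil_max V z := \big[Num.max/V z]_(v <- S) V (z + eps *: v).
Definition stencil_min V z := \big[Num.min/V z]_(v <- S) V (z + eps *: v).

Lemma stencil_max_ge_id V z : V z <= stencil_max V z.
Proof. exact: bigmax_ge_id. Qed.

Lemma stencil_min_le_id V z : stencil_min V z <= V z.
Proof. exact: bigmin_le_id. Qed.

Lemma le_stencil_max V z v : v \in S -> V (z + eps *: v) <= stencil_max V z.
Proof. by move=> Sv; exact: le_bigmax_seq. Qed.

Lemma stencil_min_le V z v : v \in S -> stencil_min V z <= V (z + eps *: v).
Proof. by move=> Sv; exact: ge_bigmin_seq. Qed.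

Lemma disc_inflap_scaled V z : eps != 0 ->
  eps ^+ 2 * disc_inflap eps S V z = 2 * V z - stencil_max V z - stencil_min V z.
Proof. by move=> eps_neq0; rewrite /disc_inflap mulrA mulfV ?mul1r // sqrf_eq0. Qed.

Lemma stencil_maxN V z : stencil_max (fun x => - V x) z = - stencil_min V z.
Proof. by rewrite /stencil_min (big_morph _ (@oppr_min R) erefl). Qed.

Lemma stencil_minN V z : stencil_min (fun x => - V x) z = - stencil_max V z.
Proof. by rewrite /stencil_max (big_morph _ (@oppr_max R) erefl). Qed.

Lemma disc_inflapN V z : disc_inflap eps S (fun x => - V x) z = - disc_inflap eps S V z.
Proof.
have := stencil_maxN V z; have := stencil_minN V z.
by rewrite /disc_inflap /stencil_max /stencil_min /= => -> ->; ring.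
Qed.

Lemma stencil_max_cases V z :
  stencil_max V z = V z \/ exists2 v, v \in S & stencil_max V z = V (z + eps *: v).
Proof. by apply: big_selective => a b; case: leP; [right | left]. Qed.

Section Shift.
Variables (V W : pt -> R) (z : pt) (c : R).
Hypothesis VW_z : V z <= W z + c.
Hypothesis VW_stencil : forall v, v \in S -> V (z + eps *: v) <= W (z + eps *: v) + c.

Lemma stencil_max_leD : stencil_max V z <= stencil_max W z + c.
Proof.
rewrite {1}/stencil_max big_seq; apply: bigmax_le => [|v Sv].
  by rewrite (le_trans VW_z) // lerD2r stencil_max_ge_id.
by rewrite (le_trans (VW_stencil Sv)) // lerD2r le_stencil_max.
Qed.

Lemma stencil_min_leD : stencil_min V z <= stencil_min W z + c.
Proof.
rewrite -lerBlDr {2}/stencil_min big_seq; apply: le_bigmin => [|v Sv].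
  by rewrite lerBlDr (le_trans _ VW_z) // stencil_min_le_id.
by rewrite lerBlDr (le_trans _ (VW_stencil Sv)) // stencil_min_le.
Qed.

End Shift.

(* Each stencil value is bounded below through its mirror image, which the
   maximum dominates. *)
Lemma stencil_max_add_min_ge V z b : (forall v, v \in S -> - v \in S) ->
  (exists v, v \in S) -> 0 <= b ->
  (forall v, v \in S -> 2 * V z + 2 * b <= V (z + eps *: v) + V (z + eps *: - v)) ->
  2 * V z + b <= stencil_max V z + stencil_min V z.
Proof.
move=> S_sym [v0 Sv0] b_ge0 second_diff.
have le_max := le_stencil_max V z.
have max_ge : V z + b <= stencil_max V z.
  have := second_diff _ Sv0; have := le_max _ Sv0; have := le_max _ (S_sym _ Sv0); lra.
rewrite -lerBlDl /stencil_min big_seq; apply: le_bigmin => [|v Sv]; first by lra.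
have := second_diff _ Sv; have := le_max _ (S_sym _ Sv); lra.
Qed.

End StencilOperator.

Lemma disc_inflap_paraboloid_le (R : realType) (n : nat) (eps : R) (S : seq 'rV[R]_n.+1)
    (V : 'rV[R]_n.+1 -> R) c a z :
  0 < eps -> 0 <= a -> (forall v, v \in S -> enorm v = 1) ->
  (forall v, v \in S -> - v \in S) -> (exists v, v \in S) ->
  V z = c + a * sq z ->
  (forall v, v \in S -> c + a * sq (z + eps *: v) <= V (z + eps *: v)) ->
  disc_inflap eps S V z <= - a.
Proof.
move=> eps_gt0 a_ge0 S_unit S_sym S_ne Vz V_ge.
have second_diff v : v \in S ->
    2 * V z + 2 * (a * eps ^+ 2) <= V (z + eps *: v) + V (z + eps *: - v).
  move=> Sv; have := V_ge _ Sv; have := V_ge _ (S_sym _ Sv).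
  have sq_v : sq v = 1 by rewrite -sqr_enorm S_unit ?expr1n.
  have := sq_stencil_pair z v eps; rewrite sq_v mulr1 Vz; nra.
have := stencil_max_add_min_ge S_sym S_ne (mulr_ge0 a_ge0 (sqr_ge0 eps)) second_diff.
have eps2_gt0 : 0 < eps ^+ 2 by rewrite exprn_gt0.
move=> mx_mn; rewrite -(ler_pM2l eps2_gt0) disc_inflap_scaled ?gt_eqF //; nra.
Qed.

(* Perron's method: the pointwise supremum of the subsolutions lying below
   [hi] is itself a subsolution, and monotonicity makes it a fixed point. *)
Lemma monotone_fixpoint (R : realType) (X : Type) (N : X -> Prop)
    (T : (X -> R) -> X -> R) (lo hi : X -> R) :
  (forall U V, (forall x, N x -> U x <= V x) -> forall x, N x -> T U x <= T V x) ->
  (forall x, N x -> lo x <= hi x) ->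
  (forall x, N x -> lo x <= T lo x) -> (forall x, N x -> T hi x <= hi x) ->
  exists U, forall x, N x -> U x = T U x.
Proof.
move=> T_mono lo_hi lo_sub hi_super.
pose sub U := forall x, N x -> (lo x <= U x <= hi x) /\ U x <= T U x.
have sub_lo : sub lo by move=> x Nx; rewrite lexx lo_hi //=; split=> //; exact: lo_sub.
pose E x : set R := fun y => exists2 U, sub U & y = U x.
pose Us x := sup (E x).
have E_sup x : N x -> has_sup (E x).
  move=> Nx; split; first by exists (lo x), lo.
  by exists (hi x) => _ [U /(_ x Nx) [/andP[_ ?] _] ->].
have le_Us U : sub U -> forall x, N x -> U x <= Us x.
  by move=> subU x Nx; apply: sup_upper_bound; [exact: E_sup | exists U].
have Us_hi x : N x -> Us x <= hi x.
  move=> Nx; apply: ge_sup; first by exists (lo x), lo.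
  by move=> _ [U /(_ x Nx) [/andP[_ ?] _] ->].
have Us_sub x : N x -> Us x <= T Us x.
  move=> Nx; apply: ge_sup; first by exists (lo x), lo.
  move=> _ [U subU ->]; apply: le_trans (proj2 (subU x Nx)) _.
  exact: T_mono (le_Us U subU) _ Nx.
have TUs_sub : sub (T Us).
  move=> x Nx; split; last exact: T_mono Us_sub _ Nx.
  apply/andP; split.
    by apply: le_trans (lo_sub x Nx) (T_mono _ _ (le_Us _ sub_lo) _ Nx).
  by apply: le_trans (hi_super x Nx); exact: T_mono Us_hi _ Nx.
exists Us => x Nx; apply/eqP; rewrite eq_le Us_sub //=.
exact: le_Us TUs_sub x Nx.
Qed.

Section Existence.
Variables (R : realType) (n : nat).
Notation pt := 'rV[R]_n.+1.
Variables (Om : pt -> Prop) (f G : pt -> R) (m : nat) (Th : 'I_m -> simplex R n).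
Variables (h eps : R) (S : seq pt).
Hypotheses (Om_open : eopen Om) (h_gt0 : 0 < h) (h_le_eps : h <= eps).
Hypothesis mesh_h : forall x, inner Om h x -> einterior (in_mesh Th) x.
Hypotheses (Th_nondeg : forall k, nondeg_simplex (Th k)) (Th_conf : conforming Th).
Hypothesis S_unit : forall v, v \in S -> enorm v = 1.
Hypothesis S_sym : forall v, v \in S -> - v \in S.
Hypothesis S_ne : exists v, v \in S.
Implicit Types (U : pt -> R) (z : pt).

Let eps_gt0 : 0 < eps. Proof. exact: (lt_le_trans h_gt0 h_le_eps). Qed.

Definition perron U z : R :=
  if `[< inner Om (2 * eps) z >] then
    (stencil_max eps S (interp Th U) z + stencil_min eps S (interp Th U) z
     + eps ^+ 2 * f z) / 2
  else G z.

Lemma perron_inner U z : inner Om (2 * eps) z ->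
  perron U z = interp Th U z + eps ^+ 2 / 2 * (f z - disc_inflap eps S (interp Th U) z).
Proof.
move=> z_in; rewrite /perron asboolT //.
have := disc_inflap_scaled S (interp Th U) z (lt0r_neq0 eps_gt0); lra.
Qed.

Lemma perron_outer U z : ~ inner Om (2 * eps) z -> perron U z = G z.
Proof. by move=> z_out; rewrite /perron asboolF. Qed.

Lemma perron_mono U1 U2 : (forall z, is_node Th z -> U1 z <= U2 z) ->
  forall z, perron U1 z <= perron U2 z.
Proof.
move=> U12 z; rewrite /perron; case: asboolP => // _.
have I12 x : interp Th U1 x <= interp Th U2 x + 0.
  by rewrite addr0; apply: interp_le => k i; apply: U12; exists k, i.
have := @stencil_max_leD _ _ eps S _ _ z 0 (I12 z) (fun v _ => I12 _).
have := @stencil_min_leD _ _ eps S _ _ z 0 (I12 z) (fun v _ => I12 _).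
lra.
Qed.

Lemma disc_inflap_interp_paraboloid c a z : 0 <= a -> is_node Th z ->
  inner Om (2 * eps) z -> disc_inflap eps S (interp Th (fun x => c + a * sq x)) z <= - a.
Proof.
move=> a_ge0 z_node z_in.
apply: disc_inflap_paraboloid_le => //; first exact: interp_node.
move=> v Sv; apply: interp_paraboloid_ge => //.
exact: (stencil_in_mesh Om_open h_gt0 h_le_eps mesh_h (S_unit Sv)).
Qed.

Section Barriers.
Variables (c a : R).
Hypothesis a_ge0 : 0 <= a.
Hypothesis f_le_a : forall x, Om x -> `|f x| <= a.
Let q (x : pt) := c + a * sq x.

Lemma paraboloid_subsolution :
  (forall z, is_node Th z -> ~ inner Om (2 * eps) z -> q z <= G z) ->
  forall z, is_node Th z -> q z <= perron q z.
Proof.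
move=> q_le_G z z_node; have [z_in|z_out] := pselect (inner Om (2 * eps) z); last first.
  by rewrite perron_outer //; exact: q_le_G.
rewrite perron_inner // interp_node // lerDl.
have := disc_inflap_interp_paraboloid c a_ge0 z_node z_in.
have := f_le_a (proj1 z_in); rewrite ler_norml => /andP[fa _].
have : 0 <= eps ^+ 2 / 2 by rewrite divr_ge0 ?sqr_ge0.
nra.
Qed.

Lemma paraboloid_supersolution :
  (forall z, is_node Th z -> ~ inner Om (2 * eps) z -> G z <= - q z) ->
  forall z, is_node Th z -> perron (fun x => - q x) z <= - q z.
Proof.
move=> G_le_q z z_node; have [z_in|z_out] := pselect (inner Om (2 * eps) z); last first.
  by rewrite perron_outer //; exact: G_le_q.
rewrite perron_inner //.
have -> : interp Th (fun x => - q x) = (fun x => - interp Th q x).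
  by apply/funext => x; exact: interpN.
rewrite disc_inflapN /= interp_node // gerDl.
have := disc_inflap_interp_paraboloid c a_ge0 z_node z_in.
have := f_le_a (proj1 z_in); rewrite ler_norml => /andP[_ fa].
have : 0 <= eps ^+ 2 / 2 by rewrite divr_ge0 ?sqr_ge0.
nra.
Qed.

End Barriers.

Lemma disc_solution_exists Mf : (forall x, Om x -> `|f x| <= Mf) ->
  exists u, disc_solution Th Om eps S f G u.
Proof.
move=> f_le_Mf; set a := `|Mf|.
have f_le_a x : Om x -> `|f x| <= a by move=> Omx; rewrite (le_trans (f_le_Mf x Omx)) ?ler_norm.
have a_ge0 : 0 <= a by exact: normr_ge0.
have [B B_ge] := node_bounded Th (fun z => `|G z| + a * sq z).
have aq_ge0 z : 0 <= a * sq z by rewrite mulr_ge0 ?sq_ge0.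
have [U U_fix] : exists U, forall z, is_node Th z -> U z = perron U z.
  apply: (monotone_fixpoint (fun U V UV z _ => perron_mono UV z)
    (lo := fun x => - B + a * sq x) (hi := fun x => - (- B + a * sq x))).
  - by move=> z /B_ge; have := normr_ge0 (G z); have := aq_ge0 z; lra.
  - apply: paraboloid_subsolution => // z /B_ge GB _.
    by have := ler_norm (- G z); rewrite normrN; have := aq_ge0 z; lra.
  - apply: paraboloid_supersolution => // z /B_ge GB _.
    by have := ler_norm (G z); have := aq_ge0 z; lra.
exists (interp Th U); split; first exact: in_Vh_interp.
split=> [z z_node z_in|z z_node z_out]; last by rewrite interp_node // U_fix // perron_outer.
have := perron_inner U z_in; rewrite -U_fix // interp_node // => U_eq.
have c_gt0 : 0 < eps ^+ 2 / 2 by rewrite divr_gt0 ?exprn_gt0.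
have : eps ^+ 2 / 2 * (f z - disc_inflap eps S (interp Th U) z) = 0 by lra.
by move=> /eqP; rewrite mulf_eq0 (negbTE (lt0r_neq0 c_gt0)) subr_eq0 => /eqP ->.
Qed.

End Existence.

Lemma disc_solution_stencil (R : realType) (n m : nat) (Th : 'I_m -> simplex R n)
    Om eps S (f G u : 'rV[R]_n.+1 -> R) z :
  eps != 0 -> disc_solution Th Om eps S f G u -> is_node Th z -> inner Om (2 * eps) z ->
  2 * u z - stencil_max eps S u z - stencil_min eps S u z = eps ^+ 2 * f z.
Proof. by move=> eps_neq0 [_ [u_eq _]] z_node z_in; rewrite -disc_inflap_scaled // u_eq. Qed.

Lemma disc_solutionN (R : realType) (n m : nat) (Th : 'I_m -> simplex R n)
    Om eps S (f G u : 'rV[R]_n.+1 -> R) :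
  disc_solution Th Om eps S f G u ->
  disc_solution Th Om eps S (fun x => - f x) (fun x => - G x) (fun x => - u x).
Proof.
move=> [Vu [u_in u_out]]; split; first exact: in_VhN.
by split=> z z_node z_at; rewrite ?disc_inflapN ?u_in ?u_out.
Qed.

Section Comparison.
Variables (R : realType) (n : nat).
Notation pt := 'rV[R]_n.+1.
Variables (Om : pt -> Prop) (f G : pt -> R) (m : nat) (Th : 'I_m -> simplex R n).
Variables (h eps : R) (S : seq pt).
Hypotheses (Om_open : eopen Om) (h_gt0 : 0 < h) (h_le_eps : h <= eps).
Hypothesis mesh_h : forall x, inner Om h x -> einterior (in_mesh Th) x.
Hypothesis S_unit : forall v, v \in S -> enorm v = 1.
Variables (u1 u2 : pt -> R).
Hypotheses (sol1 : disc_solution Th Om eps S f G u1) (sol2 : disc_solution Th Om eps S f G u2).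
Variable M : R.
Hypothesis M_gt0 : 0 < M.
Hypothesis gap_le_M : forall z, is_node Th z -> u1 z - u2 z <= M.

Let eps_neq0 : eps != 0. Proof. exact: lt0r_neq0 (lt_le_trans h_gt0 h_le_eps). Qed.

Definition contact z := is_node Th z /\ u1 z - u2 z = M.

Lemma contact_inner z : contact z -> inner Om (2 * eps) z.
Proof.
move=> [z_node gap_z]; apply: contrapT => z_out; move: M_gt0.
by rewrite -gap_z (proj2 (proj2 sol1)) // (proj2 (proj2 sol2)) // subrr ltxx.
Qed.

Lemma gap_bary k lam x : bary (Th k) lam x ->
  u1 x - u2 x <= M /\ (u1 x - u2 x = M -> forall i, 0 < lam i -> contact (Th k i)).
Proof.
move=> bx; have Vgap := in_VhB (proj1 sol1) (proj1 sol2).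
have vert_le i : 0 < lam i -> u1 (Th k i) - u2 (Th k i) <= M.
  by move=> _; apply: gap_le_M; exists k, i.
split; first exact: (in_Vh_le_vertices Vgap bx vert_le).
move=> gap_x i lam_i; split; first by exists k, i.
exact: (in_Vh_eq_vertices Vgap bx vert_le gap_x).
Qed.

Lemma contact_stencil z : contact z ->
  stencil_max eps S u1 z = stencil_max eps S u2 z + M /\
  stencil_min eps S u1 z = stencil_min eps S u2 z + M.
Proof.
move=> cz; have z_in := contact_inner cz; case: cz => z_node gap_z.
have gap_stencil v : v \in S -> u1 (z + eps *: v) <= u2 (z + eps *: v) + M.
  move=> Sv; have [k [lam bp]] := stencil_in_mesh Om_open h_gt0 h_le_eps mesh_h (S_unit Sv) z_in.
  by rewrite -lerBlDl; case: (gap_bary bp).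
have gap_at_z : u1 z <= u2 z + M by rewrite -lerBlDl gap_z.
have := stencil_max_leD gap_at_z gap_stencil; have := stencil_min_leD gap_at_z gap_stencil.
have := disc_solution_stencil eps_neq0 sol1 z_node z_in.
have := disc_solution_stencil eps_neq0 sol2 z_node z_in.
lra.
Qed.

(* At a contact node where [u1] is largest among contact nodes, a stencil point
   realizing the maximum of [u1] is itself a convex combination of contact nodes. *)
Lemma contact_stencil_max z : contact z -> (forall y, contact y -> u1 y <= u1 z) ->
  stencil_max eps S u1 z = u1 z.
Proof.
move=> cz z_max; have [//|[v Sv max_v]] := stencil_max_cases eps S u1 z.
have [k [lam bp]] := stencil_in_mesh Om_open h_gt0 h_le_eps mesh_h (S_unit Sv) (contact_inner cz).
have [gap_p gap_p_eq] := gap_bary bp.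
have u2p := le_stencil_max eps u2 z Sv.
have [max_eq _] := contact_stencil cz.
have /gap_p_eq all_contact : u1 (z + eps *: v) - u2 (z + eps *: v) = M by lra.
apply/eqP; rewrite eq_le stencil_max_ge_id andbT max_v.
exact: (in_Vh_le_vertices (proj1 sol1) bp (fun i lam_i => z_max _ (all_contact i lam_i))).
Qed.

Lemma no_contact_of_neg : (exists2 c, c < 0 & forall x, Om x -> f x <= c) ->
  ~ exists z, contact z.
Proof.
move=> [c c_lt0 f_le_c] /(node_argmax u1) [z [cz z_max]].
have z_in := contact_inner cz; have z_node := cz.1.
have := disc_solution_stencil eps_neq0 sol1 z_node z_in.
rewrite contact_stencil_max //; last by move=> y []; exact: z_max.
have : eps ^+ 2 * f z < 0.
  by rewrite pmulr_rlt0 ?exprn_gt0 ?(lt_le_trans h_gt0) // (le_lt_trans (f_le_c _ z_in.1)).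
have := stencil_min_le_id eps S u1 z; lra.
Qed.

(* (M.1) yields a maximizer of [u1] on the contact set one of whose stencil
   simplices reaches outside the maximizers; flatness of the stencil at that
   node forces that simplex to consist of maximizers. *)
Lemma no_contact_of_zero : (forall x, Om x -> f x = 0) -> cond_M1 Th Om eps S ->
  ~ exists z, contact z.
Proof.
move=> f0 M1 /(node_argmax u1) [z0 [cz0 z0_max]].
pose P y := contact y /\ u1 y = u1 z0.
have P_inner y : P y -> is_node Th y /\ inner Om (2 * eps) y.
  by move=> [cy _]; split; [exact: cy.1 | exact: contact_inner].
have [z [z' [[cz u1z] [_ [notPz' z'_near]]]]] := M1 P P_inner (ex_intro _ z0 (conj cz0 erefl)).
have z_max y : contact y -> u1 y <= u1 z by rewrite u1z => -[]; exact: z0_max.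
have [z'_eq|[v Sv [k [i [lam [vert_i [bp lam_i]]]]]]] := z'_near.
  by apply: notPz'; rewrite z'_eq.
apply: notPz'; rewrite -vert_i.
have z_in := contact_inner cz.
have max1 := contact_stencil_max cz z_max.
have := disc_solution_stencil eps_neq0 sol1 cz.1 z_in; rewrite f0 ?mulr0; last exact: z_in.1.
rewrite max1 => min1.
have [max2 min2] := contact_stencil cz.
have u1_le := le_stencil_max eps u1 z Sv; have u1_ge := stencil_min_le eps u1 z Sv.
have u2_le := le_stencil_max eps u2 z Sv; have u2_ge := stencil_min_le eps u2 z Sv.
have u1p : u1 (z + eps *: v) = u1 z by lra.
have /(proj2 (gap_bary bp)) all_contact : u1 (z + eps *: v) - u2 (z + eps *: v) = M by lra.
split; first exact: all_contact.
rewrite -u1z; apply: (in_Vh_eq_vertices (proj1 sol1) bp _ u1p) => // j lam_j.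
exact: z_max (all_contact j lam_j).
Qed.

End Comparison.

Section Uniqueness.
Variables (R : realType) (n : nat).
Notation pt := 'rV[R]_n.+1.
Variables (Om : pt -> Prop) (m : nat) (Th : 'I_m -> simplex R n).
Variables (h eps : R) (S : seq pt).
Hypotheses (Om_open : eopen Om) (h_gt0 : 0 < h) (h_le_eps : h <= eps).
Hypothesis mesh_h : forall x, inner Om h x -> einterior (in_mesh Th) x.
Hypothesis S_unit : forall v, v \in S -> enorm v = 1.

Lemma disc_solution_le f G u1 u2 :
  (exists2 c, c < 0 & forall x, Om x -> f x <= c) \/
  ((forall x, Om x -> f x = 0) /\ cond_M1 Th Om eps S) ->
  disc_solution Th Om eps S f G u1 -> disc_solution Th Om eps S f G u2 ->
  forall z, is_node Th z -> u1 z <= u2 z.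
Proof.
move=> f_case sol1 sol2 z0 z0_node.
have [z [[z_node _] z_max]] :=
  node_argmax (fun z => u1 z - u2 z) (ex_intro _ z0 (conj z0_node I)).
rewrite -subr_le0 (le_trans (z_max _ z0_node I)) // leNgt; apply/negP => gap_gt0.
have gap_le y : is_node Th y -> u1 y - u2 y <= u1 z - u2 z by move=> y_node; exact: z_max.
have contact_z : exists y, contact Th u1 u2 (u1 z - u2 z) y by exists z.
case: f_case => [f_neg|[f0 M1]].
  exact: (no_contact_of_neg Om_open h_gt0 h_le_eps mesh_h S_unit sol1 sol2 gap_gt0 gap_le f_neg).
exact: (no_contact_of_zero Om_open h_gt0 h_le_eps mesh_h S_unit sol1 sol2 gap_gt0 gap_le f0 M1).
Qed.

Lemma disc_solution_unique f G u1 u2 :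
  (exists2 c, c < 0 & forall x, Om x -> f x <= c) \/
  (exists2 c, 0 < c & forall x, Om x -> c <= f x) \/
  ((forall x, Om x -> f x = 0) /\ cond_M1 Th Om eps S) ->
  disc_solution Th Om eps S f G u1 -> disc_solution Th Om eps S f G u2 ->
  forall x, in_mesh Th x -> u1 x = u2 x.
Proof.
move=> f_cases sol1 sol2.
have le_nodes v1 v2 : disc_solution Th Om eps S f G v1 -> disc_solution Th Om eps S f G v2 ->
    forall z, is_node Th z -> v1 z <= v2 z.
  case: f_cases => [f_neg|[[c c_gt0 c_le_f]|f0_M1]]; last exact: disc_solution_le (or_intror f0_M1).
    exact: disc_solution_le (or_introl f_neg).
  (* [-v2] and [-v1] solve the problem with right-hand side [-f < 0] *)
  move=> s1 s2 z z_node; rewrite -lerN2.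
  apply: disc_solution_le (disc_solutionN s2) (disc_solutionN s1) z z_node; left.
  by exists (- c) => [|x Omx]; rewrite ?oppr_lt0 ?lerN2 ?c_le_f.
apply: in_Vh_eq_on_mesh (proj1 sol1) (proj1 sol2) _ => k i.
by apply/le_anti; rewrite !le_nodes //; exists k, i.
Qed.

End Uniqueness.

Theorem lemma3p5 (R : realType) (n : nat) (Om : 'rV[R]_n.+1 -> Prop)
  (f g : 'rV[R]_n.+1 -> R) (gt : R -> 'rV[R]_n.+1 -> R)
  (m : nat) (Th : 'I_m -> simplex R n) (h eps theta : R) (S : seq 'rV[R]_n.+1) :
  bounded_domain_cb Om ->
  (* (RHS.1) *)
  econt_on Om f -> (exists M, forall x, Om x -> `|f x| <= M) ->
  (* (RHS.2) *)
  ((exists2 c, c < 0 & forall x, Om x -> f x <= c) \/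
   (exists2 c, 0 < c & forall x, Om x -> c <= f x) \/
   (forall x, Om x -> f x = 0)) ->
  (* (BC.1) *)
  econt_on (boundary Om) g ->
  (* (BC.2) *)
  (forall e, 0 < e -> econt_on (eclosure Om) (gt e)) ->
  (forall alpha, 0 <= alpha <= 1 -> holder alpha (boundary Om) g ->
     (forall e, 0 < e -> holder alpha (eclosure Om) (gt e)) /\
     exists C, forall e, 0 < e -> forall x, boundary Om x ->
       `|g x - gt e x| <= C * powR e alpha) ->
  (* the mesh T_h *)
  (forall k, nondeg_simplex (Th k)) -> conforming Th ->
  0 < h -> (forall k i j, enorm (Th k i - Th k j) <= h) ->
  (exists k i j, enorm (Th k i - Th k j) = h) ->
  (forall x, inner Om h x -> einterior (in_mesh Th) x) ->
  (forall x, einterior (in_mesh Th) x -> Om x) ->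
  (* parameters *)
  h <= eps -> le_diam Om eps -> 0 < theta <= 1 -> sphere_net theta S ->
  (* (M.1) in case (RHS.2b) *)
  ((forall x, Om x -> f x = 0) -> cond_M1 Th Om eps S) ->
  (exists u, disc_solution Th Om eps S f (gt eps) u) /\
  (forall u1 u2, disc_solution Th Om eps S f (gt eps) u1 ->
     disc_solution Th Om eps S f (gt eps) u2 ->
     forall x, in_mesh Th x -> u1 x = u2 x).
Proof.
move=> [_ [Om_open _]] _ [Mf f_le_Mf] f_cases _ _ _ Th_nondeg Th_conf h_gt0 _ _ mesh_h _
  h_le_eps _ _ [S_unit [S_sym S_net]] M1.
have S_ne : exists v, v \in S by have [v Sv _] := S_net _ (enorm_delta R n); exists v.
split; first exact: (disc_solution_exists (gt eps) Om_open h_gt0 h_le_eps mesh_h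
  Th_nondeg Th_conf S_unit S_sym S_ne f_le_Mf).
move=> u1 u2; apply: (disc_solution_unique Om_open h_gt0 h_le_eps mesh_h S_unit).
by case: f_cases => [|[|f0]]; [left | right; left | right; right; split; last exact: M1].
Qed.
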